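(* Let $I\subseteq\mathbb{R}$ be an interval, $a,b\in I$ with $a<b$, assume $h(\frac12)>0$, and let $f:I\to\mathbb{R}$ be $h$-convex on $I$ and integrable on $[a,b]$. Then $$\frac{1}{b-a}\int_a^b f(x)\,dx-\frac{1}{2h(\frac12)}f\Big(\frac{a+b}{2}\Big)\ \ge\ \left|\frac{1}{b-a}\int_a^b\Big|\frac{f(x)+f(a+b-x)}{2}\Big|\,dx-\frac{1}{2h(\frac12)}\Big|f\Big(\frac{a+b}{2}\Big)\Big|\right|\ \ge 0.$$
   Context: Let $J$ be an interval with $(0,1)\subseteq J$ and $h:J\to\mathbb{R}$ a non-negative function, not identically zero. A non-negative function $g$ defined on an interval $K$ is called $h$-convex on $K$ if for all $x,y\in K$ and all $t\in(0,1)$: $g(tx+(1-t)y)\le h(t)g(x)+h(1-t)g(y)$. *)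

From Stdlib Require Import Reals.
Open Scope R_scope.

Definition is_interval (I : R -> Prop) : Prop :=
  forall x y z, I x -> I y -> x <= z <= y -> I z.

Definition admissible_h (J : R -> Prop) (h : R -> R) : Prop :=
  is_interval J /\
  (forall t, 0 < t < 1 -> J t) /\
  (forall t, J t -> 0 <= h t) /\
  (exists t, J t /\ h t <> 0).

Definition h_convex (h : R -> R) (K : R -> Prop) (g : R -> R) : Prop :=
  (forall x, K x -> 0 <= g x) /\
  (forall x y t, K x -> K y -> 0 < t < 1 ->
     g (t * x + (1 - t) * y) <= h t * g x + h (1 - t) * g y).

(** Since an h-convex function is non-negative by definition, both absolute
    values in the statement are inert: the symmetrized integrand
    [(f x + f (a + b - x)) / 2] has the same mean as [f], and [f] at the
    midpoint is its own modulus.  The middle term thus equals the left one,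
    which is non-negative by the left Hermite-Hadamard inequality
    [f ((a + b) / 2) <= 2 h(1/2) * mean f], obtained by integrating
    [f ((a + b) / 2) <= h(1/2) (f x + f (a + b - x))] over [[a, b]]. *)

From Stdlib Require Import Reals Lra ssreflect.
From Coquelicot Require Import Coquelicot.
Open Scope R_scope.
Set Implicit Arguments.

Lemma is_RInt_reflect (f : R -> R) (a b l : R) :
  is_RInt f a b l -> is_RInt (fun x => f (a + b - x)) a b l.
Proof.
  move=> Hf.
  have Hba : is_RInt f (-1 * a + (a + b)) (-1 * b + (a + b)) (opp l).
  { replace (-1 * a + (a + b)) with b by ring.
    replace (-1 * b + (a + b)) with a by ring.
    exact: is_RInt_swap. }
  have Hlin := is_RInt_scal _ _ _ (-1) _ (is_RInt_comp_lin _ _ _ _ _ _ Hba).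
  replace l with (scal (-1) (opp l)).
  - apply: is_RInt_ext Hlin => x _.
    rewrite /scal /= /mult /=. replace (-1 * x + (a + b)) with (a + b - x); ring.
  - rewrite /scal /opp /= /mult /=. ring.
Qed.

Lemma is_RInt_symmetrize (f : R -> R) (a b l : R) :
  is_RInt f a b l -> is_RInt (fun x => (f x + f (a + b - x)) / 2) a b l.
Proof.
  move=> Hf.
  have Hsum := is_RInt_scal _ _ _ (/ 2) _ (is_RInt_plus _ _ _ _ _ _ Hf (is_RInt_reflect Hf)).
  replace l with (scal (/ 2) (plus l l)).
  - apply: is_RInt_ext Hsum => x _. rewrite /scal /plus /= /mult /=. field.
  - rewrite /scal /plus /= /mult /=. field.
Qed.

Lemma h_convex_midpoint (h : R -> R) (K : R -> Prop) (g : R -> R) :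
  h_convex h K g ->
  forall x y, K x -> K y -> g ((x + y) / 2) <= h (1 / 2) * (g x + g y).
Proof.
  move=> [_ Hconv] x y Kx Ky.
  have := Hconv x y (1 / 2) Kx Ky ltac:(lra).
  replace (1 / 2 * x + (1 - 1 / 2) * y) with ((x + y) / 2) by field.
  replace (1 - 1 / 2) with (1 / 2) by field.
  lra.
Qed.

Lemma hermite_hadamard_left (h : R -> R) (I : R -> Prop) (f : R -> R) (a b l : R) :
  is_interval I -> I a -> I b -> a < b -> 0 < h (1 / 2) -> h_convex h I f ->
  is_RInt f a b l ->
  1 / (2 * h (1 / 2)) * f ((a + b) / 2) <= 1 / (b - a) * l.
Proof.
  move=> hI Ia Ib hab hpos hf Hf.
  have Hmid : (b - a) * f ((a + b) / 2) <= h (1 / 2) * (l + l).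
  { apply: (is_RInt_le (fun _ => f ((a + b) / 2))
                       (fun x => h (1 / 2) * (f x + f (a + b - x))) a b); first lra.
    - exact: is_RInt_const.
    - exact: (is_RInt_scal _ _ _ _ _ (is_RInt_plus _ _ _ _ _ _ Hf (is_RInt_reflect Hf))).
    - move=> x Hx /=.
      replace ((a + b) / 2) with ((x + (a + b - x)) / 2) by field.
      apply: (h_convex_midpoint hf); apply: (hI a b); auto; lra. }
  apply Rmult_le_reg_l with (2 * h (1 / 2) * (b - a)); first nra.
  replace (2 * h (1 / 2) * (b - a) * (1 / (2 * h (1 / 2)) * f ((a + b) / 2)))
    with ((b - a) * f ((a + b) / 2)) by (field; lra).
  replace (2 * h (1 / 2) * (b - a) * (1 / (b - a) * l))
    with (h (1 / 2) * (l + l)) by (field; lra).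
  exact Hmid.
Qed.

Theorem theorem15 (J : R -> Prop) (h : R -> R) (I : R -> Prop) (f : R -> R)
  (a b : R)
  (hJ : admissible_h J h)
  (hI : is_interval I) (ha : I a) (hb : I b) (hab : a < b)
  (hhalf : 0 < h (1/2))
  (hf : h_convex h I f)
  (pr : Riemann_integrable f a b) :
  exists pr2 : Riemann_integrable
                 (fun x => Rabs ((f x + f (a + b - x)) / 2)) a b,
    (1 / (b - a)) * RiemannInt pr - 1 / (2 * h (1/2)) * f ((a + b) / 2)
      >= Rabs ((1 / (b - a)) * RiemannInt pr2
               - 1 / (2 * h (1/2)) * Rabs (f ((a + b) / 2)))
    /\ Rabs ((1 / (b - a)) * RiemannInt pr2
             - 1 / (2 * h (1/2)) * Rabs (f ((a + b) / 2))) >= 0.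
Proof.
  have [f_nonneg _] := hf.
  have I_ab : forall x, a <= x <= b -> I x by move=> x Hx; apply: (hI a b).
  have Hf : is_RInt f a b (RiemannInt pr).
  { rewrite -RInt_Reals. exact: RInt_correct (ex_RInt_Reals_1 _ _ _ pr). }
  have Habs : is_RInt (fun x => Rabs ((f x + f (a + b - x)) / 2)) a b (RiemannInt pr).
  { apply: is_RInt_ext (is_RInt_symmetrize Hf).
    rewrite Rmin_left ?Rmax_right; try lra. move=> x Hx.
    have fx := f_nonneg x (I_ab x ltac:(lra)).
    have fx' := f_nonneg (a + b - x) (I_ab (a + b - x) ltac:(lra)).
    rewrite Rabs_right; lra. }
  have Hex : ex_RInt (fun x => Rabs ((f x + f (a + b - x)) / 2)) a b
    by exists (RiemannInt pr).
  exists (ex_RInt_Reals_0 _ _ _ Hex).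
  rewrite -(RInt_Reals _ _ _ (ex_RInt_Reals_0 _ _ _ Hex)) (is_RInt_unique _ _ _ _ Habs).
  have fm := f_nonneg _ (I_ab ((a + b) / 2) ltac:(lra)).
  have HH := hermite_hadamard_left hI ha hb hab hhalf hf Hf.
  rewrite (Rabs_right (f _)) ?Rabs_right; lra.
Qed.
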